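(* Let $M,K$ be symmetric positive definite $d\times d$ matrices and $H(q,p)=\frac12p^TM^{-1}p+\frac12q^TKq$. Write $M=LL^T$ and $U^TL^{-1}KL^{-T}U=\Omega^2=\mathrm{diag}(\omega_1^2,\dots,\omega_d^2)$ with $U$ orthogonal and $\omega_i>0$, and introduce modal variables by $q=L^{-T}U\Omega^{-1}Q$, $p=LUP$ (so $H=\frac12\sum_i((P^i)^2+(Q^i)^2)$). For $k>0$ let $\tilde M(k)=\begin{bmatrix}\cos\theta(k)&\chi(k)\sin\theta(k)\\-\chi(k)^{-1}\sin\theta(k)&\cos\theta(k)\end{bmatrix}$ with $\theta(k)\in\mathbb{R}$, $\chi(k)\ne0$, and set $\rho(k)=\frac12(\chi(k)-\chi(k)^{-1})^2$. Suppose a numerical map $\psi_h$ acts in the modal variables by $(Q^i,P^i)\mapsto\tilde M(\omega_ih)(Q^i,P^i)^T$ independently for each $i$ (as is the case for a consistent reversible volume-preserving integrator such as a palindromic splitting method applied with stable step size $h$, $\tilde M(k)$ being its one-step matrix with step $k$ for the oscillator $dq/dt=p,dp/dt=-q$). If $(q_0,p_0)$ has density $\propto e^{-H}$ and $(q_n,p_n)=\psi_h^n(q_0,p_0)$, then for every $n$ $$0\le\mathbb{E}\big(H(q_n,p_n)-H(q_0,p_0)\big)\le\sum_{j=1}^d\rho(\omega_jh).$$ *)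

From Stdlib Require Import Reals List.
Open Scope R_scope.

Fixpoint sum_to (n : nat) (f : nat -> R) : R :=
  match n with O => 0 | S m => sum_to m f + f m end.

(* d x d matrices as functions on indices (only indices < d matter),
   vectors of R^d as functions nat -> R *)
Definition mat := nat -> nat -> R.
Definition vec := nat -> R.

Definition mmul (d : nat) (A B : mat) : mat :=
  fun i j => sum_to d (fun k => A i k * B k j).
Definition tr (A : mat) : mat := fun i j => A j i.
Definition mvec (d : nat) (A : mat) (x : vec) : vec :=
  fun i => sum_to d (fun k => A i k * x k).
Definition idm : mat := fun i j => if Nat.eqb i j then 1 else 0.
Definition diagm (w : vec) : mat := fun i j => if Nat.eqb i j then w i else 0.
Definition quad (d : nat) (A : mat) (x : vec) : R :=
  sum_to d (fun i => x i * mvec d A x i).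

Definition meq (d : nat) (A B : mat) : Prop :=
  forall i j, (i < d)%nat -> (j < d)%nat -> A i j = B i j.

Definition symmetric (d : nat) (A : mat) : Prop :=
  forall i j, (i < d)%nat -> (j < d)%nat -> A i j = A j i.
Definition pos_def (d : nat) (A : mat) : Prop :=
  forall x : vec, (exists i, (i < d)%nat /\ x i <> 0) -> 0 < quad d A x.
Definition spd (d : nat) (A : mat) : Prop := symmetric d A /\ pos_def d A.

Definition is_inverse (d : nat) (A Ainv : mat) : Prop :=
  meq d (mmul d A Ainv) idm /\ meq d (mmul d Ainv A) idm.

Definition orthogonal (d : nat) (U : mat) : Prop :=
  meq d (mmul d (tr U) U) idm /\ meq d (mmul d U (tr U)) idm.

Definition state := (vec * vec)%type.

Definition hamiltonian (d : nat) (Minv K : mat) (z : state) : R :=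
  / 2 * quad d Minv (snd z) + / 2 * quad d K (fst z).

Definition Mtilde_Q (theta chi : R -> R) (k Q P : R) : R :=
  cos (theta k) * Q + chi k * sin (theta k) * P.
Definition Mtilde_P (theta chi : R -> R) (k Q P : R) : R :=
  - / chi k * sin (theta k) * Q + cos (theta k) * P.

Definition rho (chi : R -> R) (k : R) : R := / 2 * (chi k - / chi k) ^ 2.

Definition int_R (g : R -> R) (l : R) : Prop :=
  forall eps, 0 < eps -> exists A, 0 < A /\
    forall a b, a <= - A -> A <= b ->
      exists pr : Riemann_integrable g a b, Rabs (RiemannInt pr - l) < eps.

Fixpoint iter_int (n : nat) (f : list R -> R) (l : R) : Prop :=
  match n with
  | O => l = f nil
  | S m => exists g : R -> R,
      (forall x, iter_int m (fun v => f (x :: v)) (g x)) /\ int_R g l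
  end.

Definition state_of_list (d : nat) (v : list R) : state :=
  (fun i => nth i v 0, fun i => nth (d + i) v 0).

(* gauss_expect d Hm F e : e is the expectation of F(q,p) when (q,p) in R^{2d}
   has density proportional to exp(-Hm(q,p)) (integrals exist). *)
Definition gauss_expect (d : nat) (Hm F : state -> R) (e : R) : Prop :=
  exists Z N,
    iter_int (2 * d) (fun v => exp (- Hm (state_of_list d v))) Z /\
    iter_int (2 * d)
      (fun v => F (state_of_list d v) * exp (- Hm (state_of_list d v))) N /\
    0 < Z /\ e = N / Z.

(* modal coordinates: q = L^{-T} U Omega^{-1} Q, p = L U P, i.e.
   Q = Omega U^T L^T q and P = U^T L^{-1} p *)
Definition modalQ (d : nat) (L U : mat) (om : vec) (q : vec) : vec :=
  fun i => om i * mvec d (tr U) (mvec d (tr L) q) i.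
Definition modalP (d : nat) (Linv U : mat) (p : vec) : vec :=
  fun i => mvec d (tr U) (mvec d Linv p) i.

(* In the modal variables H = 1/2 sum_i (Q_i^2 + P_i^2), and n steps of psi_h act on mode i
   by the matrix M~(om_i h) with theta replaced by n theta.  Hence H(psi^n z) - H(z) is a
   quadratic form sum_i (a_i Q_i^2 + b_i P_i^2 + c_i Q_i P_i) with
   a_i + b_i = sin^2 (n theta(om_i h)) rho(om_i h).  Under the density proportional to
   exp(-H) the modal variables are uncorrelated with unit variance, so the expected energy
   error is sum_i sin^2 (n theta(om_i h)) rho(om_i h), which lies in [0, sum_i rho(om_i h)].
   The Gaussian moments are computed in the original coordinates (q, p): the integral of a
   quadratic polynomial against exp(-x^T S x) over R^n follows by induction on n, completing
   the square in the first variable and using the moments of exp(-a x^2) on R. *)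

From Stdlib Require Import Reals Lra Lia List Classical FunctionalExtensionality.
From Coquelicot Require Import Coquelicot.
Open Scope R_scope.

Lemma sum_to_ext n f g : (forall i, (i < n)%nat -> f i = g i) -> sum_to n f = sum_to n g.
Proof.
  induction n as [|n IH]; simpl; intros H; auto.
  rewrite IH by (intros; apply H; lia). rewrite H by lia. reflexivity.
Qed.

Lemma sum_to_plus n f g : sum_to n (fun i => f i + g i) = sum_to n f + sum_to n g.
Proof. induction n as [|n IH]; simpl; [ring | rewrite IH; ring]. Qed.

Lemma sum_to_minus n f g : sum_to n (fun i => f i - g i) = sum_to n f - sum_to n g.
Proof. induction n as [|n IH]; simpl; [ring | rewrite IH; ring]. Qed.

Lemma sum_to_scal_l n c f : sum_to n (fun i => c * f i) = c * sum_to n f.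
Proof. induction n as [|n IH]; simpl; [ring | rewrite IH; ring]. Qed.

Lemma sum_to_scal_r n c f : sum_to n (fun i => f i * c) = sum_to n f * c.
Proof. induction n as [|n IH]; simpl; [ring | rewrite IH; ring]. Qed.

Lemma sum_to_0 n : sum_to n (fun _ => 0) = 0.
Proof. induction n as [|n IH]; simpl; [ring | rewrite IH; ring]. Qed.

Lemma sum_to_eq_0 n f : (forall i, (i < n)%nat -> f i = 0) -> sum_to n f = 0.
Proof. intros H. rewrite (sum_to_ext n f (fun _ => 0)) by exact H. apply sum_to_0. Qed.

Lemma sum_to_succ_l n f : sum_to (S n) f = f O + sum_to n (fun i => f (S i)).
Proof. induction n as [|n IH]; simpl in *; [ring | rewrite IH; ring]. Qed.

Lemma sum_to_split n m f :
  sum_to (n + m) f = sum_to n f + sum_to m (fun i => f (n + i)%nat).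
Proof.
  induction m as [|m IH]; simpl.
  - rewrite Nat.add_0_r; ring.
  - rewrite Nat.add_succ_r; simpl. rewrite IH. ring.
Qed.

Lemma sum_to_swap n m (f : nat -> nat -> R) :
  sum_to n (fun i => sum_to m (fun j => f i j)) =
  sum_to m (fun j => sum_to n (fun i => f i j)).
Proof.
  induction n as [|n IH]; simpl.
  - now rewrite sum_to_0.
  - rewrite IH, <- sum_to_plus. reflexivity.
Qed.

Lemma sum_to_kronecker n j (a : nat -> R) : (j < n)%nat ->
  sum_to n (fun i => if Nat.eqb i j then a i else 0) = a j.
Proof.
  induction n as [|n IH]; intros Hj; [lia|]. simpl.
  destruct (Nat.eqb_spec n j) as [->|Hnj].
  - rewrite sum_to_eq_0; [ring|].
    intros i Hi. destruct (Nat.eqb_spec i j); [lia | reflexivity].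
  - rewrite IH by lia. ring.
Qed.

Lemma sum_to_kronecker_r n j (a : nat -> R) : (j < n)%nat ->
  sum_to n (fun i => if Nat.eqb j i then a i else 0) = a j.
Proof.
  intros Hj. rewrite <- (sum_to_kronecker n j a Hj).
  apply sum_to_ext. intros i _. now rewrite Nat.eqb_sym.
Qed.

Lemma sum_to_le n f g : (forall i, (i < n)%nat -> f i <= g i) -> sum_to n f <= sum_to n g.
Proof.
  induction n as [|n IH]; simpl; intros H; [lra|].
  pose proof (H n ltac:(lia)). pose proof (IH ltac:(intros; apply H; lia)). lra.
Qed.

Lemma sum_to_nonneg n f : (forall i, (i < n)%nat -> 0 <= f i) -> 0 <= sum_to n f.
Proof. intros H. rewrite <- (sum_to_0 n). now apply sum_to_le. Qed.

Lemma sum_to_sqr_pos n y :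
  (exists l, (l < n)%nat /\ y l <> 0) -> 0 < sum_to n (fun l => y l * y l).
Proof.
  induction n as [|n IH]; intros [l [Hl Hy]]; [lia|]. simpl.
  assert (0 <= sum_to n (fun l => y l * y l)) by (apply sum_to_nonneg; intros; nra).
  destruct (Nat.eq_dec l n) as [->|Hln].
  - nra.
  - assert (0 < sum_to n (fun l => y l * y l)) by (apply IH; exists l; split; [lia | auto]).
    nra.
Qed.

Definition dot (n : nat) (a x : vec) : R := sum_to n (fun k => a k * x k).
Definition bilin (n : nat) (A : mat) (x y : vec) : R := sum_to n (fun i => x i * mvec n A y i).

Lemma dot_scal_l n c a x : dot n (fun k => c * a k) x = c * dot n a x.
Proof. unfold dot. rewrite <- sum_to_scal_l. apply sum_to_ext. intros; ring. Qed.

Lemma bilin_scal_l n A c x y : bilin n A (fun k => c * x k) y = c * bilin n A x y.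
Proof. unfold bilin. rewrite <- sum_to_scal_l. apply sum_to_ext. intros; ring. Qed.

Definition vec_of_list (v : list R) : vec := fun i => nth i v 0.
Definition vcons (x : R) (w : vec) : vec := fun i => match i with O => x | S k => w k end.
Definition tail_block (A : mat) : mat := fun i j => A (S i) (S j).

Lemma vec_of_list_cons x w i : vec_of_list (x :: w) i = vcons x (vec_of_list w) i.
Proof. destruct i; reflexivity. Qed.

Lemma mvec_ext n A x y :
  (forall i, (i < n)%nat -> x i = y i) -> forall j, mvec n A x j = mvec n A y j.
Proof. intros H j. apply sum_to_ext. intros i Hi. now rewrite H. Qed.

Lemma quad_ext n A x y : (forall i, (i < n)%nat -> x i = y i) -> quad n A x = quad n A y.
Proof. intros H. apply sum_to_ext. intros i Hi. now rewrite H, (mvec_ext n A x y H). Qed.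

Lemma quad_ext_mat n A B x :
  (forall i j, (i < n)%nat -> (j < n)%nat -> A i j = B i j) -> quad n A x = quad n B x.
Proof.
  intros H. apply sum_to_ext. intros i Hi. f_equal.
  apply sum_to_ext. intros k Hk. now rewrite H.
Qed.

Lemma mvec_lin n A a x y j :
  mvec n A (fun i => a * x i + y i) j = a * mvec n A x j + mvec n A y j.
Proof. unfold mvec. rewrite <- sum_to_scal_l, <- sum_to_plus. apply sum_to_ext. intros; ring. Qed.

Lemma bilin_lin_l n A a x y z :
  bilin n A (fun i => a * x i + y i) z = a * bilin n A x z + bilin n A y z.
Proof. unfold bilin. rewrite <- sum_to_scal_l, <- sum_to_plus. apply sum_to_ext. intros; ring. Qed.

Lemma bilin_lin_r n A a x y z :
  bilin n A z (fun i => a * x i + y i) = a * bilin n A z x + bilin n A z y.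
Proof.
  unfold bilin. rewrite <- sum_to_scal_l, <- sum_to_plus.
  apply sum_to_ext. intros. rewrite mvec_lin. ring.
Qed.

Lemma bilin_double_sum n A x y :
  bilin n A x y = sum_to n (fun k => sum_to n (fun i => x i * A i k) * y k).
Proof.
  unfold bilin, mvec.
  rewrite (sum_to_ext _ _ (fun i => sum_to n (fun k => x i * A i k * y k))).
  2:{ intros. rewrite <- sum_to_scal_l. apply sum_to_ext; intros; ring. }
  rewrite sum_to_swap. apply sum_to_ext. intros. now rewrite <- sum_to_scal_r.
Qed.

Lemma bilin_vcons0_l n A w y :
  bilin (S n) A (vcons 0 w) y = sum_to n (fun k => w k * mvec (S n) A y (S k)).
Proof. unfold bilin. rewrite sum_to_succ_l. simpl vcons. ring. Qed.

Lemma bilin_vcons0_r n A w y :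
  bilin (S n) A y (vcons 0 w) =
  sum_to n (fun k => sum_to (S n) (fun i => y i * A i (S k)) * w k).
Proof.
  rewrite bilin_double_sum, (sum_to_succ_l n (fun k => _ * vcons 0 w k)).
  simpl vcons. ring.
Qed.

Lemma quad_vcons0 n A w : quad (S n) A (vcons 0 w) = quad n (tail_block A) w.
Proof.
  unfold quad. rewrite sum_to_succ_l. simpl vcons. rewrite Rmult_0_l, Rplus_0_l.
  apply sum_to_ext. intros k _. f_equal.
  unfold mvec. rewrite sum_to_succ_l. simpl vcons.
  rewrite Rmult_0_r, Rplus_0_l. reflexivity.
Qed.

Lemma quad_decomp n A x y w :
  quad (S n) A (fun i => x * y i + vcons 0 w i) =
  x * x * quad (S n) A y +
  x * sum_to n (fun k => (sum_to (S n) (fun i => y i * A i (S k)) + mvec (S n) A y (S k)) * w k) +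
  quad n (tail_block A) w.
Proof.
  change (quad (S n) A ?z) with (bilin (S n) A z z).
  rewrite bilin_lin_l, !bilin_lin_r, bilin_vcons0_r, bilin_vcons0_l.
  change (bilin (S n) A (vcons 0 w) (vcons 0 w)) with (quad (S n) A (vcons 0 w)).
  rewrite quad_vcons0.
  rewrite (sum_to_ext n (fun k => (_ + _) * w k)
     (fun k => sum_to (S n) (fun i => y i * A i (S k)) * w k + w k * mvec (S n) A y (S k)))
    by (intros; ring).
  rewrite sum_to_plus. unfold quad, bilin. ring.
Qed.

Lemma dot_decomp n (b : vec) x y w :
  dot (S n) b (fun i => x * y i + vcons 0 w i) = x * dot (S n) b y + dot n (fun k => b (S k)) w.
Proof.
  unfold dot.
  rewrite (sum_to_ext _ _ (fun i => x * (b i * y i) + b i * vcons 0 w i)) by (intros; ring).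
  rewrite sum_to_plus, sum_to_scal_l, (sum_to_succ_l n (fun i => b i * vcons 0 w i)).
  simpl vcons. ring.
Qed.

Lemma quad_outer n m (f g : nat -> vec) x :
  quad n (fun a b => sum_to m (fun i => f i a * g i b)) x =
  sum_to m (fun i => dot n (f i) x * dot n (g i) x).
Proof.
  unfold quad, mvec, dot.
  rewrite (sum_to_ext n _ (fun a => sum_to m (fun i => sum_to n (fun b => x a * f i a * (g i b * x b))))).
  2:{ intros a _. rewrite <- sum_to_scal_l, <- sum_to_swap. apply sum_to_ext. intros b _.
      rewrite <- sum_to_scal_r, <- sum_to_scal_l. apply sum_to_ext. intros; ring. }
  rewrite sum_to_swap. apply sum_to_ext. intros i _.
  rewrite <- sum_to_scal_r. apply sum_to_ext. intros a _.
  rewrite <- sum_to_scal_l. apply sum_to_ext; intros; ring.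
Qed.

Lemma quad_plus n A B x : quad n (fun a b => A a b + B a b) x = quad n A x + quad n B x.
Proof.
  unfold quad, mvec. rewrite <- sum_to_plus. apply sum_to_ext. intros.
  rewrite <- Rmult_plus_distr_l, <- sum_to_plus. f_equal. apply sum_to_ext. intros; ring.
Qed.

Lemma quad_zero_vec n A x : (forall i, (i < n)%nat -> x i = 0) -> quad n A x = 0.
Proof. intros H. apply sum_to_eq_0. intros i Hi. rewrite H; auto; ring. Qed.

Lemma quad_zero_mat n x : quad n (fun _ _ => 0) x = 0.
Proof. apply sum_to_eq_0. intros i _. unfold mvec. rewrite sum_to_eq_0 by (intros; ring). ring. Qed.

Lemma pos_def_nonneg n A x : pos_def n A -> 0 <= quad n A x.
Proof.
  intros HP. destruct (classic (exists i, (i < n)%nat /\ x i <> 0)) as [E|E].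
  - left. now apply HP.
  - right. symmetry. apply quad_zero_vec. intros i Hi.
    apply NNPP. intros C. apply E. eauto.
Qed.

(** * One-dimensional Gaussian integrals *)

Definition lim_pinf (F : R -> R) (l : R) : Prop :=
  forall eps, 0 < eps -> exists A, forall b, A <= b -> Rabs (F b - l) < eps.
Definition lim_minf (F : R -> R) (l : R) : Prop :=
  forall eps, 0 < eps -> exists A, forall b, b <= A -> Rabs (F b - l) < eps.

Lemma lim_pinf_plus f g l1 l2 :
  lim_pinf f l1 -> lim_pinf g l2 -> lim_pinf (fun x => f x + g x) (l1 + l2).
Proof.
  intros H1 H2 eps He.
  destruct (H1 (eps / 2)) as [A1 HA1]; [lra|]. destruct (H2 (eps / 2)) as [A2 HA2]; [lra|].
  exists (Rmax A1 A2). intros b Hb.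
  specialize (HA1 b (Rle_trans _ _ _ (Rmax_l _ _) Hb)).
  specialize (HA2 b (Rle_trans _ _ _ (Rmax_r _ _) Hb)).
  apply Rabs_def2 in HA1; apply Rabs_def2 in HA2; apply Rabs_def1; lra.
Qed.

Lemma lim_minf_plus f g l1 l2 :
  lim_minf f l1 -> lim_minf g l2 -> lim_minf (fun x => f x + g x) (l1 + l2).
Proof.
  intros H1 H2 eps He.
  destruct (H1 (eps / 2)) as [A1 HA1]; [lra|]. destruct (H2 (eps / 2)) as [A2 HA2]; [lra|].
  exists (Rmin A1 A2). intros b Hb.
  specialize (HA1 b (Rle_trans _ _ _ Hb (Rmin_l _ _))).
  specialize (HA2 b (Rle_trans _ _ _ Hb (Rmin_r _ _))).
  apply Rabs_def2 in HA1; apply Rabs_def2 in HA2; apply Rabs_def1; lra.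
Qed.

Lemma Rabs_scal_lt c u eps :
  0 < eps -> Rabs u < eps / (Rabs c + 1) -> Rabs (c * u) < eps.
Proof.
  intros He Hu. rewrite Rabs_mult.
  pose proof (Rabs_pos c). pose proof (Rabs_pos u).
  apply Rle_lt_trans with ((Rabs c + 1) * Rabs u); [nra|].
  replace eps with ((Rabs c + 1) * (eps / (Rabs c + 1))) by (field; lra).
  apply Rmult_lt_compat_l; lra.
Qed.

Lemma lim_pinf_scal f l c : lim_pinf f l -> lim_pinf (fun x => c * f x) (c * l).
Proof.
  intros H eps He. destruct (H (eps / (Rabs c + 1))) as [A HA].
  { apply Rdiv_lt_0_compat; [lra|]. pose proof (Rabs_pos c); lra. }
  exists A. intros b Hb. rewrite <- Rmult_minus_distr_l. now apply Rabs_scal_lt, HA.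
Qed.

Lemma lim_minf_scal f l c : lim_minf f l -> lim_minf (fun x => c * f x) (c * l).
Proof.
  intros H eps He. destruct (H (eps / (Rabs c + 1))) as [A HA].
  { apply Rdiv_lt_0_compat; [lra|]. pose proof (Rabs_pos c); lra. }
  exists A. intros b Hb. rewrite <- Rmult_minus_distr_l. now apply Rabs_scal_lt, HA.
Qed.

Lemma lim_pinf_minf_of_inv_bound a (P : R -> R) : 0 < a ->
  (forall x, 1 <= Rabs x -> Rabs (P x) <= / (a * Rabs x)) -> lim_pinf P 0 /\ lim_minf P 0.
Proof.
  intros Ha H.
  assert (K : forall eps, 0 < eps -> forall x, 1 + / (a * eps) <= Rabs x -> Rabs (P x - 0) < eps).
  { intros eps He x Hx. rewrite Rminus_0_r.
    assert (0 < / (a * eps)) by (apply Rinv_0_lt_compat; nra).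
    eapply Rle_lt_trans; [apply H; lra|].
    assert (Hx' : / (a * eps) < Rabs x) by lra.
    apply (Rmult_lt_reg_l (a * Rabs x)); [apply Rmult_lt_0_compat; lra|].
    rewrite Rinv_r by (apply Rgt_not_eq; apply Rmult_lt_0_compat; lra).
    apply (Rmult_lt_compat_l (a * eps)) in Hx'; [|nra].
    rewrite Rinv_r in Hx' by (apply Rgt_not_eq; nra). nra. }
  split.
  - intros eps He. exists (1 + / (a * eps)). intros b Hb. apply K; auto.
    eapply Rle_trans; [exact Hb | apply Rle_abs].
  - intros eps He. exists (- (1 + / (a * eps))). intros b Hb. apply K; auto.
    rewrite <- Rabs_Ropp. eapply Rle_trans; [|apply Rle_abs]. lra.
Qed.

Lemma int_R_antiderivative (f F : R -> R) lp lm :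
  (forall x, is_derive F x (f x)) -> (forall x, continuous f x) ->
  lim_pinf F lp -> lim_minf F lm -> int_R f (lp - lm).
Proof.
  intros HD HC Hp Hm eps Heps.
  destruct (Hp (eps / 2)) as [A1 HA1]; [lra|].
  destruct (Hm (eps / 2)) as [A2 HA2]; [lra|].
  pose proof (Rabs_pos A1). pose proof (Rabs_pos A2).
  pose proof (Rle_abs A1). pose proof (Rle_abs (- A2)). rewrite Rabs_Ropp in *.
  exists (Rabs A1 + Rabs A2 + 1). split; [lra|].
  intros a b Ha Hb.
  assert (Hex : ex_RInt f a b) by (apply (@ex_RInt_continuous R_CompleteNormedModule); auto).
  exists (ex_RInt_Reals_0 _ _ _ Hex). rewrite <- RInt_Reals.
  assert (E : RInt f a b = F b - F a).
  { apply is_RInt_unique, (@is_RInt_derive R_CompleteNormedModule F f); auto. }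
  rewrite E. specialize (HA1 b ltac:(lra)). specialize (HA2 a ltac:(lra)).
  apply Rabs_def2 in HA1. apply Rabs_def2 in HA2. apply Rabs_def1; lra.
Qed.

Lemma int_R_shift (g : R -> R) l c : int_R g l -> int_R (fun x => g (x + c)) l.
Proof.
  intros H eps Heps. destruct (H eps Heps) as [A [HA H1]].
  pose proof (Rle_abs c). pose proof (Rle_abs (- c)). rewrite Rabs_Ropp in *.
  exists (A + Rabs c). split; [lra|].
  intros a b Ha Hb.
  destruct (H1 (a + c) (b + c) ltac:(lra) ltac:(lra)) as [pr Hpr].
  assert (Hex0 : ex_RInt g (1 * a + c) (1 * b + c)).
  { rewrite !Rmult_1_l. now apply ex_RInt_Reals_1. }
  assert (Hcomp : forall y, scal 1 (g (1 * y + c)) = g (y + c)).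
  { intros y. change (scal 1 ?u) with (1 * u). rewrite !Rmult_1_l. reflexivity. }
  assert (Hex : ex_RInt (fun x => g (x + c)) a b).
  { apply (ex_RInt_ext (fun y => scal 1 (g (1 * y + c)))); [intros; apply Hcomp|].
    exact (@ex_RInt_comp_lin R_NormedModule g 1 c a b Hex0). }
  exists (ex_RInt_Reals_0 _ _ _ Hex).
  rewrite <- RInt_Reals. rewrite <- (RInt_Reals g _ _ pr) in Hpr.
  assert (E : RInt (fun x => g (x + c)) a b = RInt g (1 * a + c) (1 * b + c)).
  { rewrite <- (@RInt_comp_lin R_CompleteNormedModule g 1 c a b Hex0).
    apply RInt_ext. intros; symmetry; apply Hcomp. }
  rewrite E, !Rmult_1_l.
  exact Hpr.
Qed.

Definition gauss (a x : R) : R := exp (- (a * x ^ 2)).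

Lemma gauss_pos a x : 0 < gauss a x.
Proof. apply exp_pos. Qed.

Lemma gauss_continuous a x : continuous (gauss a) x.
Proof.
  apply (@ex_derive_continuous R_AbsRing R_NormedModule). unfold gauss. auto_derive. auto.
Qed.

Lemma ex_RInt_gauss a u v : ex_RInt (gauss a) u v.
Proof. apply (@ex_RInt_continuous R_CompleteNormedModule). intros; apply gauss_continuous. Qed.

Definition gauss_prim (a t : R) : R := RInt (gauss a) 0 t.

Lemma gauss_prim_derive a x : is_derive (gauss_prim a) x (gauss a x).
Proof.
  apply (@is_derive_RInt R_NormedModule (gauss a) (gauss_prim a) 0 x).
  - apply filter_forall. intros y. apply (@RInt_correct R_CompleteNormedModule), ex_RInt_gauss.
  - apply gauss_continuous.
Qed.

Lemma gauss_prim_incr a t t' : t <= t' -> gauss_prim a t <= gauss_prim a t'.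
Proof.
  intros H. unfold gauss_prim.
  rewrite <- (@RInt_Chasles R_CompleteNormedModule (gauss a) 0 t t') by apply ex_RInt_gauss.
  assert (0 <= RInt (gauss a) t t').
  { apply RInt_ge_0; auto; [apply ex_RInt_gauss|]. intros; left; apply gauss_pos. }
  change (plus ?u ?v) with (u + v). lra.
Qed.

Lemma gauss_prim_odd a t : gauss_prim a (- t) = - gauss_prim a t.
Proof.
  unfold gauss_prim.
  assert (Heven : forall y, gauss a (-1 * y + 0) = gauss a y).
  { intros y. unfold gauss. f_equal. ring. }
  pose proof (@RInt_comp_lin R_CompleteNormedModule (gauss a) (-1) 0 0 t) as E.
  replace (-1 * 0 + 0) with 0 in E by ring. replace (-1 * t + 0) with (- t) in E by ring.
  rewrite <- E by apply ex_RInt_gauss.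
  rewrite (@RInt_scal R_CompleteNormedModule (fun y => gauss a (-1 * y + 0)) 0 t (-1)).
  - rewrite (RInt_ext _ (gauss a)) by (intros; apply Heven).
    change (scal (-1) ?u) with (-1 * u). ring.
  - apply (ex_RInt_ext (gauss a)); [intros; symmetry; apply Heven | apply ex_RInt_gauss].
Qed.

Lemma gauss_prim_bounded a : 0 < a -> forall t, gauss_prim a t <= exp a / (2 * a).
Proof.
  intros Ha t. assert (0 < exp a / (2 * a)) by (apply Rdiv_lt_0_compat; [apply exp_pos | lra]).
  destruct (Rle_lt_dec 0 t) as [Ht|Ht].
  - (* [gauss a x <= exp (a - 2 a x)] since [a x^2 >= 2 a x - a]; integrate the majorant *)
    set (G := fun x => - exp (a - 2 * a * x) / (2 * a)).
    assert (HG : forall x, is_derive G x (exp (a - 2 * a * x))).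
    { intros x. unfold G. auto_derive; auto. unfold Rminus. field. lra. }
    assert (Hcont : forall x, continuous (fun x => exp (a - 2 * a * x)) x).
    { intros x. apply (@ex_derive_continuous R_AbsRing R_NormedModule). auto_derive. auto. }
    assert (HI : RInt (fun x => exp (a - 2 * a * x)) 0 t = G t - G 0).
    { apply is_RInt_unique, (@is_RInt_derive R_CompleteNormedModule G); auto. }
    unfold gauss_prim. eapply Rle_trans.
    + apply (RInt_le _ (fun x => exp (a - 2 * a * x))); auto.
      * apply ex_RInt_gauss.
      * apply (@ex_RInt_continuous R_CompleteNormedModule). auto.
      * intros x _. unfold gauss.
        destruct (Req_dec (- (a * x ^ 2)) (a - 2 * a * x)) as [E|E]; [rewrite E; lra|].
        left. apply exp_increasing.
        assert (0 <= a * (x - 1) ^ 2) by (apply Rmult_le_pos; [lra | apply pow2_ge_0]). nra.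
    + rewrite HI. unfold G. replace (a - 2 * a * 0) with a by ring.
      assert (0 < exp (a - 2 * a * t) / (2 * a)) by (apply Rdiv_lt_0_compat; [apply exp_pos | lra]).
      unfold Rdiv in *. lra.
  - assert (Hle : gauss_prim a t <= gauss_prim a 0) by (apply gauss_prim_incr; lra).
    unfold gauss_prim at 2 in Hle. rewrite RInt_point in Hle. change (zero : R) with 0 in Hle. lra.
Qed.

Lemma abs_mul_gauss_le a x : 0 < a -> 1 <= Rabs x -> Rabs x * gauss a x <= / (a * Rabs x).
Proof.
  intros Ha Hx. unfold gauss. rewrite exp_Ropp.
  pose proof (exp_ineq1_le (a * x ^ 2)).
  assert (Hx2 : x ^ 2 = Rabs x * Rabs x) by (rewrite <- Rabs_mult, Rabs_right; [ring | nra]).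
  rewrite Hx2 in *.
  assert (0 < a * (Rabs x * Rabs x)) by (apply Rmult_lt_0_compat; nra).
  apply Rle_trans with (Rabs x / (a * (Rabs x * Rabs x))).
  - unfold Rdiv. apply Rmult_le_compat_l; [lra|]. apply Rinv_le_contravar; lra.
  - right. field. lra.
Qed.

Lemma gauss_lim a : 0 < a -> lim_pinf (gauss a) 0 /\ lim_minf (gauss a) 0.
Proof.
  intros Ha. apply (lim_pinf_minf_of_inv_bound a); auto. intros x Hx.
  rewrite Rabs_right by (left; apply gauss_pos).
  eapply Rle_trans; [|apply abs_mul_gauss_le; auto]. pose proof (gauss_pos a x). nra.
Qed.

Lemma mul_gauss_lim a :
  0 < a -> lim_pinf (fun x => x * gauss a x) 0 /\ lim_minf (fun x => x * gauss a x) 0.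
Proof.
  intros Ha. apply (lim_pinf_minf_of_inv_bound a); auto. intros x Hx.
  rewrite Rabs_mult, (Rabs_right (gauss a x)) by (left; apply gauss_pos).
  now apply abs_mul_gauss_le.
Qed.

Lemma gauss_prim_lim a : 0 < a ->
  exists l, 0 < l /\ lim_pinf (gauss_prim a) l /\ lim_minf (gauss_prim a) (- l).
Proof.
  intros Ha.
  set (E := fun y => exists t, 0 <= t /\ y = gauss_prim a t).
  destruct (completeness E) as [l [Hub Hl]].
  { exists (exp a / (2 * a)). intros y [t [_ ->]]. now apply gauss_prim_bounded. }
  { exists (gauss_prim a 0), 0. split; [lra | auto]. }
  assert (Hle : forall t, gauss_prim a t <= l).
  { intros t. destruct (Rle_lt_dec 0 t).
    - apply Hub. now exists t.
    - apply Rle_trans with (gauss_prim a 0); [apply gauss_prim_incr; lra|].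
      apply Hub. exists 0. split; [lra | auto]. }
  assert (Hpos : 0 < gauss_prim a 1).
  { apply RInt_gt_0; [lra | intros; apply gauss_pos | intros; apply gauss_continuous]. }
  assert (Lp : lim_pinf (gauss_prim a) l).
  { intros eps He.
    destruct (classic (exists t, 0 <= t /\ l - eps < gauss_prim a t)) as [[t0 [Ht0 Ht1]]|Hn].
    - exists t0. intros b Hb.
      assert (gauss_prim a t0 <= gauss_prim a b) by now apply gauss_prim_incr.
      specialize (Hle b). apply Rabs_def1; lra.
    - exfalso. assert (l <= l - eps); [|lra]. apply Hl. intros y [t [Ht ->]].
      apply Rnot_lt_le. intros C. apply Hn. now exists t. }
  exists l. split; [specialize (Hle 1); lra|]. split; auto.
  intros eps He. destruct (Lp eps He) as [A HA]. exists (- A). intros b Hb.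
  replace b with (- - b) by ring. rewrite gauss_prim_odd.
  replace (- gauss_prim a (- b) - - l) with (- (gauss_prim a (- b) - l)) by ring.
  rewrite Rabs_Ropp. apply HA. lra.
Qed.

Lemma int_R_gauss_quadratic a : 0 < a -> exists Z1, 0 < Z1 /\ forall K p q r,
  int_R (fun x => K * (gauss a x * (p * x ^ 2 + q * x + r))) (K * Z1 * (p / (2 * a) + r)).
Proof.
  intros Ha. destruct (gauss_prim_lim a Ha) as [l [Hl [Lp Lm]]].
  exists (2 * l). split; [lra|]. intros K p q r.
  destruct (gauss_lim a Ha) as [G1 G2]. destruct (mul_gauss_lim a Ha) as [X1 X2].
  (* an antiderivative, found by integrating [x^2 gauss a x] by parts *)
  set (F := fun x => - (K * p) / (2 * a) * (x * gauss a x) + - (K * q) / (2 * a) * gauss a x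
                     + K * (p / (2 * a) + r) * gauss_prim a x).
  replace (K * (2 * l) * (p / (2 * a) + r)) with
    ((- (K * p) / (2 * a) * 0 + - (K * q) / (2 * a) * 0 + K * (p / (2 * a) + r) * l) -
     (- (K * p) / (2 * a) * 0 + - (K * q) / (2 * a) * 0 + K * (p / (2 * a) + r) * - l))
    by ring.
  apply (int_R_antiderivative _ F).
  - intros x. unfold F, gauss. auto_derive.
    + repeat split. exists (gauss a x). apply gauss_prim_derive.
    + replace (Derive (fun y => gauss_prim a y) x) with (gauss a x)
        by (symmetry; apply is_derive_unique, gauss_prim_derive).
      unfold gauss. replace (x * (x * 1)) with (x ^ 2) by ring. field. lra.
  - intros x. apply (@ex_derive_continuous R_AbsRing R_NormedModule). unfold gauss. auto_derive. auto.
  - repeat apply lim_pinf_plus; now apply lim_pinf_scal.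
  - repeat apply lim_minf_plus; now apply lim_minf_scal.
Qed.

(** * Gaussian integrals of quadratic polynomials on R^n *)

Lemma iter_int_ext n : forall f f' l,
  (forall v, length v = n -> f v = f' v) -> iter_int n f l -> iter_int n f' l.
Proof.
  induction n as [|n IH]; simpl; intros f f' l E H.
  - rewrite H. now apply E.
  - destruct H as [g [Hg Hi]]. exists g. split; auto. intros x.
    apply (IH (fun v => f (x :: v))); auto. intros v Hv. apply E. simpl; auto.
Qed.

Fixpoint shift_list (a : nat -> R) (v : list R) : list R :=
  match v with
  | nil => nil
  | x :: w => (x + a O) :: shift_list (fun i => a (S i)) w
  end.

Lemma vec_of_shift_list a v i :
  (i < length v)%nat -> vec_of_list (shift_list a v) i = vec_of_list v i + a i.
Proof.
  revert a i; induction v as [|x v IH]; simpl; intros a i Hi; [lia|].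
  destruct i; unfold vec_of_list; simpl; auto. apply (IH (fun i => a (S i))). lia.
Qed.

Lemma iter_int_shift n : forall f l a,
  iter_int n f l -> iter_int n (fun v => f (shift_list a v)) l.
Proof.
  induction n as [|n IH]; simpl; intros f l a H; auto.
  destruct H as [g [Hg Hi]]. exists (fun x => g (x + a O)). split.
  - intros x. apply (IH (fun v => f ((x + a O) :: v))), Hg.
  - now apply int_R_shift.
Qed.

Definition quad_poly (n : nat) (A : mat) (b : vec) (g : R) (x : vec) : R :=
  quad n A x + dot n b x + g.

Definition frob (n : nat) (A B : mat) : R :=
  sum_to n (fun i => sum_to n (fun j => A i j * B i j)).

Definition gauss_poly (n : nat) (S A : mat) (b : vec) (g : R) (v : list R) : R :=
  quad_poly n A b g (vec_of_list v) * exp (- quad n S (vec_of_list v)).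

Definition is_half_inverse (n : nat) (S Sg : mat) : Prop :=
  forall i j, (i < n)%nat -> (j < n)%nat ->
    sum_to n (fun k => S i k * Sg k j) = if Nat.eqb i j then / 2 else 0.

(* [Z] is the mass of [exp (- x^T S x)] and [Sg = S^-1 / 2] its covariance matrix. *)
Definition gaussian_moments (n : nat) (S : mat) (Z : R) (Sg : mat) : Prop :=
  0 < Z /\ symmetric n Sg /\ is_half_inverse n S Sg /\
  forall A b g, iter_int n (gauss_poly n S A b g) (Z * (g + frob n A Sg)).

Lemma quad_scal n c A x : quad n (fun i j => c * A i j) x = c * quad n A x.
Proof.
  unfold quad, mvec. rewrite <- sum_to_scal_l. apply sum_to_ext. intros.
  rewrite <- sum_to_scal_l, <- (sum_to_scal_l n (x i)), <- sum_to_scal_l.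
  apply sum_to_ext; intros; ring.
Qed.

Lemma quad_poly_scal n c A b g x :
  quad_poly n (fun i j => c * A i j) (fun i => c * b i) (c * g) x = c * quad_poly n A b g x.
Proof.
  unfold quad_poly, dot. rewrite quad_scal.
  rewrite (sum_to_ext n (fun i => c * b i * x i) (fun i => c * (b i * x i))) by (intros; ring).
  rewrite sum_to_scal_l. ring.
Qed.

Lemma frob_scal n c A B : frob n (fun i j => c * A i j) B = c * frob n A B.
Proof.
  unfold frob. rewrite <- sum_to_scal_l. apply sum_to_ext. intros.
  rewrite <- sum_to_scal_l. apply sum_to_ext. intros; ring.
Qed.

Lemma gaussian_moments_0 S : gaussian_moments O S 1 (fun _ _ => 0).
Proof.
  split; [lra|]. split; [intros i j Hi; lia|]. split; [intros i j Hi; lia|].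
  intros A b g. simpl. unfold gauss_poly, quad_poly, quad, dot, frob. simpl.
  rewrite Ropp_0, exp_0. ring.
Qed.

(* Induction step: integrate out the first coordinate after completing the square in it. *)
Section GaussianStep.

Variables (m : nat) (W Sg' : mat) (Z' : R).
Hypotheses (HW : symmetric (S m) W) (HWpos : pos_def (S m) W)
  (Htail : gaussian_moments m (tail_block W) Z' Sg').

(* [pivot_shift = (tail_block W)^-1 (W 0 (S _))], so that [W pivot] vanishes off its first entry *)
Definition pivot_shift : vec := fun i => 2 * sum_to m (fun k => Sg' i k * W O (S k)).
Definition pivot : vec := vcons 1 (fun i => - pivot_shift i).
Definition pivot_gain : R := quad (S m) W pivot.

Lemma tail_block_pivot_shift i :
  (i < m)%nat -> mvec m (tail_block W) pivot_shift i = W O (S i).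
Proof.
  destruct Htail as [_ [_ [Hhalf _]]]. intros Hi. unfold mvec, pivot_shift.
  rewrite (sum_to_ext _ _ (fun k => sum_to m (fun l => 2 * (tail_block W i k * Sg' k l) * W O (S l)))).
  2:{ intros k Hk. rewrite <- !sum_to_scal_l. apply sum_to_ext. intros; ring. }
  rewrite sum_to_swap.
  rewrite (sum_to_ext _ _ (fun l => if Nat.eqb i l then W O (S l) else 0)).
  - exact (sum_to_kronecker_r m i (fun l => W O (S l)) Hi).
  - intros l Hl.
    rewrite (sum_to_ext _ _ (fun k => 2 * W O (S l) * (tail_block W i k * Sg' k l))) by (intros; ring).
    rewrite sum_to_scal_l, Hhalf by auto. destruct (Nat.eqb i l); field.
Qed.

Lemma mvec_pivot_tail i : (i < m)%nat -> mvec (S m) W pivot (S i) = 0.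
Proof.
  intros Hi. unfold mvec. rewrite sum_to_succ_l. unfold pivot at 1; simpl vcons.
  rewrite (sum_to_ext _ _ (fun k => -1 * (tail_block W i k * pivot_shift k)))
    by (intros; unfold pivot, tail_block; simpl; ring).
  rewrite sum_to_scal_l.
  change (sum_to m (fun k => tail_block W i k * pivot_shift k))
    with (mvec m (tail_block W) pivot_shift i).
  rewrite tail_block_pivot_shift, HW by lia. ring.
Qed.

Lemma mvec_pivot_head : mvec (S m) W pivot O = pivot_gain.
Proof.
  unfold pivot_gain, quad. rewrite sum_to_succ_l, sum_to_eq_0; [unfold pivot; simpl; ring|].
  intros i Hi. rewrite mvec_pivot_tail by auto. ring.
Qed.

Lemma pivot_gain_pos : 0 < pivot_gain.
Proof. apply HWpos. exists O. split; [lia | unfold pivot; simpl; lra]. Qed.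

Lemma vcons_pivot x w i :
  vcons x w i = x * pivot i + vcons 0 (fun k => w k + x * pivot_shift k) i.
Proof. destruct i; unfold pivot; simpl; ring. Qed.

Lemma quad_vcons_pivot x w :
  quad (S m) W (vcons x w) =
  x * x * pivot_gain + quad m (tail_block W) (fun i => w i + x * pivot_shift i).
Proof.
  rewrite (quad_ext _ _ _ _ (fun i _ => vcons_pivot x w i)), quad_decomp, sum_to_eq_0.
  - fold pivot_gain. ring.
  - intros k Hk.
    assert (Hsym : sum_to (S m) (fun i => pivot i * W i (S k)) = mvec (S m) W pivot (S k)).
    { apply sum_to_ext. intros i Hi. rewrite (HW i (S k)) by lia. ring. }
    rewrite Hsym, mvec_pivot_tail by auto. ring.
Qed.

Definition step_cov : mat := fun i j =>
  pivot i * pivot j / (2 * pivot_gain) +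
  match i, j with S i', S j' => Sg' i' j' | _, _ => 0 end.

Lemma step_cov_sym : symmetric (S m) step_cov.
Proof.
  destruct Htail as [_ [HSg' _]]. pose proof pivot_gain_pos.
  intros i j Hi Hj. unfold step_cov.
  destruct i, j; try (field; lra). rewrite HSg' by lia. field; lra.
Qed.

Lemma step_cov_half_inverse : is_half_inverse (S m) W step_cov.
Proof.
  destruct Htail as [_ [_ [Hhalf _]]]. pose proof pivot_gain_pos.
  intros i j Hi Hj. unfold step_cov.
  rewrite (sum_to_ext _ _ (fun k => pivot j / (2 * pivot_gain) * (W i k * pivot k) +
             W i k * match k, j with S k', S j' => Sg' k' j' | _, _ => 0 end))
    by (intros; field; lra).
  rewrite sum_to_plus, sum_to_scal_l, (sum_to_succ_l m (fun k => W i k * match k with O => 0 | _ => _ end)).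
  rewrite Rmult_0_r, Rplus_0_l.
  change (sum_to (S m) (fun k => W i k * pivot k)) with (mvec (S m) W pivot i).
  destruct i as [|i], j as [|j].
  - rewrite mvec_pivot_head, sum_to_eq_0 by (intros; ring). unfold pivot; simpl. field. lra.
  - rewrite mvec_pivot_head. simpl Nat.eqb.
    rewrite (sum_to_ext _ _ (fun k => Sg' j k * W O (S k))).
    2:{ intros k Hk. destruct Htail as [_ [HSg' _]]. rewrite HSg' by lia. ring. }
    unfold pivot; simpl. unfold pivot_shift. field. lra.
  - rewrite mvec_pivot_tail, sum_to_eq_0 by (auto; lia || (intros; ring)). simpl. ring.
  - rewrite mvec_pivot_tail by lia. simpl Nat.eqb. rewrite <- (Hhalf i j) by lia.
    unfold tail_block. ring.
Qed.

Lemma frob_step_cov A :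
  frob (S m) A step_cov = quad (S m) A pivot / (2 * pivot_gain) + frob m (tail_block A) Sg'.
Proof.
  pose proof pivot_gain_pos. unfold frob, step_cov.
  rewrite (sum_to_ext _ _ (fun i =>
      sum_to (S m) (fun j => / (2 * pivot_gain) * (pivot i * (A i j * pivot j))) +
      sum_to (S m) (fun j => A i j * match i, j with S i', S j' => Sg' i' j' | _, _ => 0 end))).
  2:{ intros i Hi. rewrite <- sum_to_plus. apply sum_to_ext. intros; field; lra. }
  rewrite sum_to_plus. f_equal.
  - unfold quad, mvec, Rdiv. rewrite <- sum_to_scal_r. apply sum_to_ext. intros i _.
    transitivity (/ (2 * pivot_gain) * pivot i * sum_to (S m) (fun k => A i k * pivot k));
      [rewrite <- sum_to_scal_l; apply sum_to_ext; intros; ring | ring].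
  - rewrite sum_to_succ_l, (sum_to_eq_0 (S m) (fun j => A O j * 0)), Rplus_0_l by (intros; ring).
    apply sum_to_ext. intros i _.
    rewrite sum_to_succ_l, Rmult_0_r, Rplus_0_l. reflexivity.
Qed.

Lemma gauss_poly_vcons A b g x v : length v = m ->
  let E := exp (- (x * x * pivot_gain)) in
  gauss_poly (S m) W A b g (x :: v) =
  gauss_poly m (tail_block W)
    (fun i j => E * tail_block A i j)
    (fun k => E * (x * (sum_to (S m) (fun i => pivot i * A i (S k)) + mvec (S m) A pivot (S k))
                   + b (S k)))
    (E * (x * x * quad (S m) A pivot + x * dot (S m) b pivot + g))
    (shift_list (fun i => x * pivot_shift i) v).
Proof.
  intros Hv E. unfold gauss_poly. rewrite quad_poly_scal.
  assert (Hshift : forall i, (i < m)%nat ->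
    vec_of_list (shift_list (fun i => x * pivot_shift i) v) i = vec_of_list v i + x * pivot_shift i)
    by (intros; apply vec_of_shift_list; lia).
  assert (Hcons : forall i, (i < S m)%nat -> vec_of_list (x :: v) i =
      x * pivot i + vcons 0 (fun k => vec_of_list v k + x * pivot_shift k) i)
    by (intros; rewrite vec_of_list_cons; apply vcons_pivot).
  unfold quad_poly.
  rewrite (quad_ext _ W _ _ (fun i _ => vec_of_list_cons x v i)), quad_vcons_pivot.
  rewrite (quad_ext _ A _ _ Hcons), quad_decomp.
  unfold dot at 1. rewrite (sum_to_ext _ _ _ (fun i Hi => f_equal _ (Hcons i Hi))).
  fold (dot (S m) b (fun i => x * pivot i + vcons 0 (fun k => vec_of_list v k + x * pivot_shift k) i)).
  rewrite dot_decomp.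
  rewrite !(quad_ext _ _ _ _ Hshift).
  unfold dot. rewrite !(sum_to_ext _ (fun i => _ * vec_of_list (shift_list _ v) i) _
                          (fun i Hi => f_equal _ (Hshift i Hi))).
  rewrite (sum_to_ext m (fun i => (x * _ + b (S i)) * _)
    (fun i => x * ((sum_to (S m) (fun i0 => pivot i0 * A i0 (S i)) + mvec (S m) A pivot (S i))
                   * (vec_of_list v i + x * pivot_shift i))
              + b (S i) * (vec_of_list v i + x * pivot_shift i))) by (intros; ring).
  rewrite sum_to_plus, sum_to_scal_l.
  unfold E. rewrite Ropp_plus_distr, exp_plus. ring.
Qed.

Lemma gaussian_moments_step : exists Z Sg, gaussian_moments (S m) W Z Sg.
Proof.
  destruct Htail as [HZ' [_ [_ HI]]].
  pose proof pivot_gain_pos as Hgain.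
  destruct (int_R_gauss_quadratic pivot_gain Hgain) as [Z1 [HZ1 HG]].
  exists (Z' * Z1), step_cov.
  split; [now apply Rmult_lt_0_compat|].
  split; [exact step_cov_sym|]. split; [exact step_cov_half_inverse|].
  intros A b g.
  exists (fun x => Z' * (gauss pivot_gain x *
    (quad (S m) A pivot * x ^ 2 + dot (S m) b pivot * x + (g + frob m (tail_block A) Sg')))).
  split.
  - intros x. set (E := exp (- (x * x * pivot_gain))).
    eapply iter_int_ext.
    + intros v Hv. symmetry. exact (gauss_poly_vcons A b g x v Hv).
    + eapply iter_int_ext; [intros v _; reflexivity|].
      replace (Z' * _) with
        (Z' * (E * (x * x * quad (S m) A pivot + x * dot (S m) b pivot + g)
               + frob m (fun i j => E * tail_block A i j) Sg')).
      * apply iter_int_shift, HI.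
      * rewrite frob_scal. unfold gauss, E. replace (pivot_gain * x ^ 2) with (x * x * pivot_gain) by ring.
        ring.
  - rewrite frob_step_cov.
    replace (Z' * Z1 * (g + _)) with
      (Z' * Z1 * (quad (S m) A pivot / (2 * pivot_gain) + (g + frob m (tail_block A) Sg'))) by ring.
    apply HG.
Qed.

End GaussianStep.

Lemma gaussian_moments_exist n S :
  symmetric n S -> pos_def n S -> exists Z Sg, gaussian_moments n S Z Sg.
Proof.
  revert S. induction n as [|m IH]; intros W HW HWpos.
  - exists 1, (fun _ _ => 0). apply gaussian_moments_0.
  - destruct (IH (tail_block W)) as [Z' [Sg' Htail]].
    + intros i j Hi Hj. apply HW; lia.
    + intros x [i [Hi Hx]]. rewrite <- quad_vcons0. apply HWpos.
      exists (S i). split; [lia | auto].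
    + exact (gaussian_moments_step m W Sg' Z' HW HWpos Htail).
Qed.

Lemma mmul_assoc d A B C : mmul d (mmul d A B) C = mmul d A (mmul d B C).
Proof.
  apply functional_extensionality; intros i. apply functional_extensionality; intros j.
  unfold mmul.
  rewrite (sum_to_ext _ _ (fun k => sum_to d (fun l => A i l * B l k * C k j)))
    by (intros; now rewrite <- sum_to_scal_r).
  rewrite sum_to_swap. apply sum_to_ext. intros l _.
  rewrite <- sum_to_scal_l. apply sum_to_ext. intros; ring.
Qed.

Lemma meq_refl d A : meq d A A.
Proof. now intros i j _ _. Qed.

Lemma meq_sym d A B : meq d A B -> meq d B A.
Proof. intros H i j Hi Hj. symmetry. auto. Qed.

Lemma meq_trans d A B C : meq d A B -> meq d B C -> meq d A C.
Proof. intros H1 H2 i j Hi Hj. rewrite H1 by auto. auto. Qed.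

Lemma meq_mmul d A A' B B' : meq d A A' -> meq d B B' -> meq d (mmul d A B) (mmul d A' B').
Proof. intros H1 H2 i j Hi Hj. apply sum_to_ext. intros k Hk. now rewrite H1, H2. Qed.

Lemma meq_tr d A B : meq d A B -> meq d (tr A) (tr B).
Proof. intros H i j Hi Hj. unfold tr. auto. Qed.

Lemma tr_mmul d A B : meq d (tr (mmul d A B)) (mmul d (tr B) (tr A)).
Proof. intros i j _ _. apply sum_to_ext. intros; unfold tr; ring. Qed.

Lemma tr_idm : tr idm = idm.
Proof.
  apply functional_extensionality; intros i. apply functional_extensionality; intros j.
  unfold tr, idm. now rewrite Nat.eqb_sym.
Qed.

Lemma mmul_idm_l d A : meq d (mmul d idm A) A.
Proof.
  intros i j Hi Hj. unfold mmul, idm.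
  rewrite <- (sum_to_kronecker_r d i (fun k => A k j) Hi).
  apply sum_to_ext. intros k _. destruct (Nat.eqb i k); ring.
Qed.

Lemma mmul_idm_r d A : meq d (mmul d A idm) A.
Proof.
  intros i j Hi Hj. unfold mmul, idm.
  rewrite <- (sum_to_kronecker d j (fun k => A i k) Hj).
  apply sum_to_ext. intros k _. destruct (Nat.eqb k j); ring.
Qed.

Lemma mmul_diagm d A w i j : (j < d)%nat -> mmul d A (diagm w) i j = A i j * w j.
Proof.
  intros Hj. unfold mmul, diagm.
  rewrite <- (sum_to_kronecker d j (fun k => A i k * w k) Hj).
  apply sum_to_ext. intros k _. destruct (Nat.eqb k j); ring.
Qed.

Lemma mmul_cancel_l d A B C :
  meq d (mmul d A B) idm -> meq d (mmul d A (mmul d B C)) C.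
Proof.
  intros H. rewrite <- mmul_assoc.
  eapply meq_trans; [apply meq_mmul; [exact H | apply meq_refl] | apply mmul_idm_l].
Qed.

Lemma tr_inverse d A B : meq d (mmul d A B) idm -> meq d (mmul d (tr B) (tr A)) idm.
Proof.
  intros H. eapply meq_trans; [apply meq_sym, tr_mmul|]. rewrite <- tr_idm. now apply meq_tr.
Qed.

(** * The Gaussian measure on phase space *)

Definition phase_vec (d : nat) (z : state) : vec :=
  fun k => if Nat.ltb k d then fst z k else snd z (k - d)%nat.

Lemma phase_vec_state_of_list d v k : phase_vec d (state_of_list d v) k = vec_of_list v k.
Proof.
  unfold phase_vec, state_of_list, vec_of_list. simpl.
  destruct (Nat.ltb_spec k d); auto. now replace (d + (k - d))%nat with k by lia.
Qed.

Definition ham_matrix (d : nat) (K Minv : mat) : mat := fun a b =>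
  if Nat.ltb a d then (if Nat.ltb b d then K a b / 2 else 0)
  else (if Nat.ltb b d then 0 else Minv (a - d)%nat (b - d)%nat / 2).

Lemma mvec_ham_matrix_q d K Minv x l : (l < d)%nat ->
  mvec (d + d) (ham_matrix d K Minv) x l = / 2 * mvec d K x l.
Proof.
  intros Hl. unfold mvec.
  rewrite sum_to_split, (sum_to_eq_0 d (fun k => ham_matrix d K Minv l (d + k)%nat * _)), Rplus_0_r,
    <- sum_to_scal_l.
  - apply sum_to_ext. intros k Hk. unfold ham_matrix.
    destruct (Nat.ltb_spec l d), (Nat.ltb_spec k d); try lia. field.
  - intros k _. unfold ham_matrix.
    destruct (Nat.ltb_spec l d), (Nat.ltb_spec (d + k) d); try lia. ring.
Qed.

Lemma mvec_ham_matrix_p d K Minv x l :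
  mvec (d + d) (ham_matrix d K Minv) x (d + l)%nat = / 2 * mvec d Minv (fun k => x (d + k)%nat) l.
Proof.
  unfold mvec.
  rewrite sum_to_split, (sum_to_eq_0 d (fun k => ham_matrix d K Minv (d + l)%nat k * _)), Rplus_0_l,
    <- sum_to_scal_l.
  - apply sum_to_ext. intros k Hk. unfold ham_matrix.
    destruct (Nat.ltb_spec (d + l) d), (Nat.ltb_spec (d + k) d); try lia.
    replace (d + l - d)%nat with l by lia. replace (d + k - d)%nat with k by lia. field.
  - intros k Hk. unfold ham_matrix.
    destruct (Nat.ltb_spec (d + l) d), (Nat.ltb_spec k d); try lia. ring.
Qed.

Lemma quad_ham_matrix d K Minv x : quad (d + d) (ham_matrix d K Minv) x =
  / 2 * quad d K x + / 2 * quad d Minv (fun k => x (d + k)%nat).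
Proof.
  unfold quad at 1. rewrite sum_to_split.
  rewrite (sum_to_ext d _ (fun i => / 2 * (x i * mvec d K x i)))
    by (intros; rewrite mvec_ham_matrix_q by auto; ring).
  rewrite (sum_to_ext d (fun i => x (d + i)%nat * _)
             (fun i => / 2 * (x (d + i)%nat * mvec d Minv (fun k => x (d + k)%nat) i)))
    by (intros; rewrite mvec_ham_matrix_p; ring).
  now rewrite !sum_to_scal_l.
Qed.

Lemma hamiltonian_phase_vec d K Minv z :
  hamiltonian d Minv K z = quad (d + d) (ham_matrix d K Minv) (phase_vec d z).
Proof.
  rewrite quad_ham_matrix. unfold hamiltonian. rewrite (Rplus_comm (/ 2 * quad d Minv _)).
  f_equal; f_equal; apply quad_ext; intros k Hk; unfold phase_vec.
  - now destruct (Nat.ltb_spec k d); [|lia].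
  - destruct (Nat.ltb_spec (d + k) d); [lia|]. now replace (d + k - d)%nat with k by lia.
Qed.

Lemma ham_matrix_sym d K Minv :
  symmetric d K -> symmetric d Minv -> symmetric (d + d) (ham_matrix d K Minv).
Proof.
  intros HK HM a b Ha Hb. unfold ham_matrix.
  destruct (Nat.ltb_spec a d), (Nat.ltb_spec b d); auto.
  - now rewrite HK.
  - rewrite HM by lia. reflexivity.
Qed.

Lemma ham_matrix_pos_def d K Minv :
  pos_def d K -> pos_def d Minv -> pos_def (d + d) (ham_matrix d K Minv).
Proof.
  intros HK HM x [i [Hi Hx]]. rewrite quad_ham_matrix.
  pose proof (pos_def_nonneg d K x HK).
  pose proof (pos_def_nonneg d Minv (fun k => x (d + k)%nat) HM).
  destruct (Nat.ltb_spec i d).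
  - assert (0 < quad d K x) by (apply HK; eauto). lra.
  - assert (0 < quad d Minv (fun k => x (d + k)%nat)); [|lra].
    apply HM. exists (i - d)%nat. split; [lia|]. now replace (d + (i - d))%nat with i by lia.
Qed.

Lemma frob_plus n A B Sg : frob n (fun a b => A a b + B a b) Sg = frob n A Sg + frob n B Sg.
Proof.
  unfold frob. rewrite <- sum_to_plus. apply sum_to_ext. intros.
  rewrite <- sum_to_plus. apply sum_to_ext. intros; ring.
Qed.

Lemma frob_outer n m (f g : nat -> vec) Sg :
  frob n (fun a b => sum_to m (fun i => f i a * g i b)) Sg = sum_to m (fun i => bilin n Sg (f i) (g i)).
Proof.
  unfold frob, bilin, mvec.
  rewrite (sum_to_ext _ _ (fun a => sum_to m (fun i => sum_to n (fun b => f i a * (Sg a b * g i b))))).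
  2:{ intros a _. rewrite <- sum_to_swap. apply sum_to_ext. intros.
      rewrite <- sum_to_scal_r. apply sum_to_ext. intros; ring. }
  rewrite sum_to_swap. apply sum_to_ext. intros. apply sum_to_ext. intros.
  now rewrite sum_to_scal_l.
Qed.

Lemma gauss_expect_ext d Hm F G e :
  (forall z, F z = G z) -> gauss_expect d Hm F e -> gauss_expect d Hm G e.
Proof.
  intros E [Z [N [HZ [HN [HZpos He]]]]]. exists Z, N. repeat split; auto.
  eapply iter_int_ext; [|exact HN]. intros v _. cbv beta. now rewrite E.
Qed.

Lemma gauss_expect_quad d K Minv Z Sg :
  gaussian_moments (d + d) (ham_matrix d K Minv) Z Sg -> forall A,
  gauss_expect d (hamiltonian d Minv K) (fun z => quad (d + d) A (phase_vec d z)) (frob (d + d) A Sg).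
Proof.
  intros [HZ [_ [_ HI]]] A.
  assert (Hvec : forall A v, quad (d + d) A (phase_vec d (state_of_list d v)) = quad (d + d) A (vec_of_list v))
    by (intros; apply quad_ext; intros; apply phase_vec_state_of_list).
  exists Z, (Z * frob (d + d) A Sg). replace (2 * d)%nat with (d + d)%nat by lia.
  repeat split; auto.
  - replace Z with (Z * (1 + frob (d + d) (fun _ _ => 0) Sg)).
    + eapply iter_int_ext; [|apply (HI (fun _ _ => 0) (fun _ => 0) 1)].
      intros v _. unfold gauss_poly, quad_poly, dot.
      rewrite hamiltonian_phase_vec, Hvec, quad_zero_mat, sum_to_eq_0 by (intros; ring). ring.
    + unfold frob. rewrite sum_to_eq_0; [ring|]. intros. apply sum_to_eq_0. intros; ring.
  - replace (Z * frob (d + d) A Sg) with (Z * (0 + frob (d + d) A Sg)) by ring.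
    eapply iter_int_ext; [|apply (HI A (fun _ => 0) 0)].
    intros v _. unfold gauss_poly, quad_poly, dot.
    rewrite hamiltonian_phase_vec, !Hvec, sum_to_eq_0 by (intros; ring). ring.
  - field. lra.
Qed.

Lemma mvec_half_inverse n S Sg c k : symmetric n S -> symmetric n Sg ->
  is_half_inverse n S Sg -> (k < n)%nat ->
  mvec n Sg (fun l => 2 * mvec n S c l) k = c k.
Proof.
  intros HS HSg Hhalf Hk. unfold mvec.
  rewrite (sum_to_ext _ _ (fun l => sum_to n (fun m => 2 * c m * (S m l * Sg l k)))).
  2:{ intros l Hl. rewrite <- !sum_to_scal_l. apply sum_to_ext. intros m Hm.
      rewrite (HS l m), (HSg k l) by auto. ring. }
  rewrite sum_to_swap, <- (sum_to_kronecker_r n k c Hk).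
  apply sum_to_ext. intros m Hm. rewrite sum_to_scal_l, Hhalf, Nat.eqb_sym by auto.
  destruct (Nat.eqb k m); field.
Qed.


Lemma bilin_half_inverse n S Sg a b c : symmetric n S -> symmetric n Sg ->
  is_half_inverse n S Sg -> (forall l, (l < n)%nat -> b l = 2 * mvec n S c l) ->
  bilin n Sg a b = dot n a c.
Proof.
  intros HS HSg Hhalf Hb. apply sum_to_ext. intros k Hk. f_equal.
  rewrite (mvec_ext n Sg b _ Hb). now apply mvec_half_inverse.
Qed.

(** * Modal coordinates *)

Section Modal.

Variables (d : nat) (M Minv K L Linv U : mat) (om : vec).
Hypotheses (HMinv : is_inverse d M Minv) (HL : meq d M (mmul d L (tr L)))
  (HLinv : is_inverse d L Linv) (HU : orthogonal d U)
  (HK : spd d K) (Hom : forall i, (i < d)%nat -> 0 < om i)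
  (Hdiag : meq d (mmul d (tr U) (mmul d Linv (mmul d K (mmul d (tr Linv) U))))
                 (diagm (fun i => om i ^ 2))).

Lemma K_Linvt_U : meq d (mmul d K (mmul d (tr Linv) U)) (mmul d (mmul d L U) (diagm (fun i => om i ^ 2))).
Proof.
  apply meq_sym. eapply meq_trans; [apply meq_mmul; [apply meq_refl | apply meq_sym, Hdiag]|].
  rewrite !mmul_assoc.
  eapply meq_trans; [apply meq_mmul; [apply meq_refl | apply mmul_cancel_l, HU]|].
  apply mmul_cancel_l, HLinv.
Qed.

Lemma K_factorization :
  meq d K (mmul d (mmul d (mmul d L U) (diagm (fun i => om i ^ 2))) (mmul d (tr U) (tr L))).
Proof.
  apply meq_sym. eapply meq_trans; [apply meq_mmul; [apply meq_sym, K_Linvt_U | apply meq_refl]|].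
  rewrite !mmul_assoc.
  eapply meq_trans;
    [apply meq_mmul; [apply meq_refl | apply meq_mmul; [apply meq_refl | apply mmul_cancel_l, HU]]|].
  eapply meq_trans; [apply meq_mmul; [apply meq_refl | apply tr_inverse, HLinv]|].
  apply mmul_idm_r.
Qed.

Lemma Minv_L : meq d (mmul d Minv L) (tr Linv).
Proof.
  eapply meq_trans; [apply meq_sym, mmul_idm_r|].
  eapply meq_trans; [apply meq_mmul; [apply meq_refl | apply meq_sym, tr_inverse, HLinv]|].
  rewrite <- mmul_assoc, (mmul_assoc d Minv L (tr L)).
  eapply meq_trans; [apply meq_mmul; [apply meq_mmul; [apply meq_refl | apply meq_sym, HL] | apply meq_refl]|].
  eapply meq_trans; [apply meq_mmul; [apply HMinv | apply meq_refl]|].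
  apply mmul_idm_l.
Qed.

Lemma Minv_factorization : meq d Minv (mmul d (tr Linv) Linv).
Proof.
  eapply meq_trans; [apply meq_sym, mmul_idm_r|].
  eapply meq_trans; [apply meq_mmul; [apply meq_refl | apply meq_sym, (proj1 HLinv)]|].
  rewrite <- mmul_assoc. apply meq_mmul; [apply Minv_L | apply meq_refl].
Qed.

Lemma modalQ_dot q i : modalQ d L U om q i = om i * dot d (fun k => mmul d L U k i) q.
Proof.
  unfold modalQ, mvec, dot, mmul, tr. f_equal.
  rewrite (sum_to_ext _ _ (fun l => sum_to d (fun k => U l i * L k l * q k)))
    by (intros; rewrite <- sum_to_scal_l; apply sum_to_ext; intros; ring).
  rewrite sum_to_swap. apply sum_to_ext. intros.
  rewrite <- sum_to_scal_r. apply sum_to_ext; intros; ring.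
Qed.

Lemma modalP_dot p i : modalP d Linv U p i = dot d (fun k => mmul d (tr U) Linv i k) p.
Proof.
  unfold modalP, mvec, dot, mmul, tr.
  rewrite (sum_to_ext _ _ (fun l => sum_to d (fun k => U l i * Linv l k * p k)))
    by (intros; rewrite <- sum_to_scal_l; apply sum_to_ext; intros; ring).
  rewrite sum_to_swap. apply sum_to_ext. intros.
  rewrite <- sum_to_scal_r. apply sum_to_ext; intros; ring.
Qed.

Lemma quad_idm y : quad d idm y = sum_to d (fun a => y a * y a).
Proof.
  apply sum_to_ext. intros a Ha. f_equal. unfold mvec, idm.
  rewrite <- (sum_to_kronecker_r d a y Ha).
  apply sum_to_ext. intros b _. destruct (Nat.eqb a b); ring.
Qed.

Lemma quad_K_modal q :
  quad d K q = sum_to d (fun i => modalQ d L U om q i * modalQ d L U om q i).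
Proof.
  rewrite (quad_ext_mat d K _ q K_factorization).
  rewrite (quad_ext_mat d _ (fun a b => sum_to d (fun i => (om i ^ 2 * mmul d L U a i) * mmul d L U b i))).
  - rewrite quad_outer. apply sum_to_ext. intros i _. rewrite !modalQ_dot.
    unfold dot. rewrite (sum_to_ext _ _ (fun k => om i ^ 2 * (mmul d L U k i * q k))) by (intros; ring).
    rewrite sum_to_scal_l. ring.
  - intros a b Ha Hb. apply sum_to_ext. intros i Hi.
    rewrite mmul_diagm by auto. unfold mmul at 2, tr. f_equal; [ring|].
    apply sum_to_ext. intros; ring.
Qed.

Lemma quad_Minv_modal p :
  quad d Minv p = sum_to d (fun i => modalP d Linv U p i * modalP d Linv U p i).
Proof.
  set (y := fun l => dot d (Linv l) p).
  rewrite (quad_ext_mat d Minv _ p Minv_factorization).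
  rewrite (quad_ext_mat d _ (fun a b => sum_to d (fun l => Linv l a * Linv l b))) by (intros; reflexivity).
  rewrite quad_outer. fold y.
  transitivity (quad d idm y); [now rewrite quad_idm|].
  rewrite <- (quad_ext_mat d _ _ y (proj2 HU)).
  rewrite (quad_ext_mat d _ (fun a b => sum_to d (fun i => U a i * U b i))) by (intros; reflexivity).
  rewrite quad_outer. apply sum_to_ext. intros i _. rewrite modalP_dot.
  assert (E : dot d (fun k => mmul d (tr U) Linv i k) p = dot d (fun a => U a i) y).
  { unfold dot, y, mmul, tr.
    rewrite (sum_to_ext _ (fun k => _ * p k) (fun k => sum_to d (fun l => U l i * Linv l k * p k)))
      by (intros; now rewrite <- sum_to_scal_r).
    rewrite sum_to_swap. apply sum_to_ext. intros.
    unfold dot. rewrite <- sum_to_scal_l. apply sum_to_ext; intros; ring. }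
  now rewrite E.
Qed.

Lemma hamiltonian_modal z : hamiltonian d Minv K z =
  / 2 * sum_to d (fun i => modalQ d L U om (fst z) i ^ 2 + modalP d Linv U (snd z) i ^ 2).
Proof.
  unfold hamiltonian. rewrite quad_K_modal, quad_Minv_modal, sum_to_plus.
  rewrite (sum_to_ext d (fun i => _ ^ 2) (fun i => modalQ d L U om (fst z) i * modalQ d L U om (fst z) i))
    by (intros; ring).
  rewrite (sum_to_ext d (fun i => _ ^ 2) (fun i => modalP d Linv U (snd z) i * modalP d Linv U (snd z) i))
    by (intros; ring).
  ring.
Qed.

Lemma Minv_sym : symmetric d Minv.
Proof.
  intros a b Ha Hb. rewrite !Minv_factorization by auto.
  unfold mmul, tr. apply sum_to_ext; intros; ring.
Qed.

Lemma Minv_pos_def : pos_def d Minv.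
Proof.
  intros p [i [Hi Hp]].
  rewrite (quad_ext_mat d Minv _ p Minv_factorization).
  rewrite (quad_ext_mat d _ (fun a b => sum_to d (fun l => Linv l a * Linv l b))) by (intros; reflexivity).
  rewrite quad_outer. apply (sum_to_sqr_pos d (fun l => dot d (Linv l) p)).
  (* [p = L (Linv p)], so [Linv p] cannot vanish *)
  apply NNPP. intros C. apply Hp.
  assert (Hy : forall l, (l < d)%nat -> dot d (Linv l) p = 0).
  { intros l Hl. apply NNPP. intros C'. apply C. eauto. }
  transitivity (sum_to d (fun j => mmul d L Linv i j * p j)).
  - rewrite <- (sum_to_kronecker_r d i p Hi). apply sum_to_ext. intros j Hj.
    rewrite (proj1 HLinv) by auto. unfold idm. destruct (Nat.eqb i j); ring.
  - unfold mmul.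
    rewrite (sum_to_ext _ _ (fun j => sum_to d (fun l => L i l * Linv l j * p j)))
      by (intros; now rewrite <- sum_to_scal_r).
    rewrite sum_to_swap. apply sum_to_eq_0. intros l Hl.
    rewrite <- (Rmult_0_r (L i l)), <- (Hy l Hl). unfold dot.
    rewrite <- sum_to_scal_l. apply sum_to_ext; intros; ring.
Qed.


Lemma LUt_Linvt_U : meq d (mmul d (mmul d (tr U) (tr L)) (mmul d (tr Linv) U)) idm.
Proof.
  rewrite !mmul_assoc.
  eapply meq_trans; [apply meq_mmul; [apply meq_refl | apply mmul_cancel_l, tr_inverse, HLinv]|].
  apply HU.
Qed.

Lemma Ut_Linv_LU : meq d (mmul d (mmul d (tr U) Linv) (mmul d L U)) idm.
Proof.
  rewrite !mmul_assoc.
  eapply meq_trans; [apply meq_mmul; [apply meq_refl | apply mmul_cancel_l, HLinv]|].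
  apply HU.
Qed.

(* Phase-space vectors [r] with [Q_i = r . (q, p)], resp. [P_i = r . (q, p)], and their duals
   [c] with [r = 2 (ham_matrix) c] *)
Definition modalQ_row (i : nat) : vec :=
  fun k => if Nat.ltb k d then om i * mmul d L U k i else 0.
Definition modalP_row (i : nat) : vec :=
  fun k => if Nat.ltb k d then 0 else mmul d (tr U) Linv i (k - d)%nat.
Definition modalQ_dual (i : nat) : vec :=
  fun k => if Nat.ltb k d then mmul d (tr Linv) U k i / om i else 0.
Definition modalP_dual (i : nat) : vec :=
  fun k => if Nat.ltb k d then 0 else mmul d L U (k - d)%nat i.

Lemma ltb_lt_d k : (k < d)%nat -> Nat.ltb k d = true.
Proof. apply Nat.ltb_lt. Qed.

Lemma ltb_add_d k : Nat.ltb (d + k) d = false.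
Proof. apply Nat.ltb_ge; lia. Qed.

Lemma add_d_sub_d k : (d + k - d)%nat = k.
Proof. lia. Qed.

Lemma dot_split_q (r x : vec) : (forall k, r (d + k)%nat = 0) ->
  dot (d + d) r x = dot d r x.
Proof.
  intros Hr. unfold dot. rewrite sum_to_split, (sum_to_eq_0 d (fun k => r (d + k)%nat * _)); [ring|].
  intros k _. rewrite Hr. ring.
Qed.

Lemma dot_split_p (r x : vec) : (forall k, (k < d)%nat -> r k = 0) ->
  dot (d + d) r x = dot d (fun k => r (d + k)%nat) (fun k => x (d + k)%nat).
Proof.
  intros Hr. unfold dot. rewrite sum_to_split, (sum_to_eq_0 d (fun k => r k * _)); [ring|].
  intros k Hk. rewrite Hr by auto. ring.
Qed.

Lemma dot_modalQ_row z i : dot (d + d) (modalQ_row i) (phase_vec d z) = modalQ d L U om (fst z) i.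
Proof.
  rewrite dot_split_q by (intros; unfold modalQ_row; now rewrite ltb_add_d).
  rewrite modalQ_dot. unfold dot. rewrite <- sum_to_scal_l.
  apply sum_to_ext. intros k Hk. unfold modalQ_row, phase_vec. rewrite ltb_lt_d by auto. ring.
Qed.

Lemma dot_modalP_row z i : dot (d + d) (modalP_row i) (phase_vec d z) = modalP d Linv U (snd z) i.
Proof.
  rewrite dot_split_p by (intros; unfold modalP_row; now rewrite ltb_lt_d).
  rewrite modalP_dot. apply sum_to_ext. intros k Hk.
  unfold modalP_row, phase_vec. now rewrite ltb_add_d, add_d_sub_d.
Qed.

Lemma modalQ_row_ham_matrix i l : (i < d)%nat -> (l < d + d)%nat ->
  modalQ_row i l = 2 * mvec (d + d) (ham_matrix d K Minv) (modalQ_dual i) l.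
Proof.
  intros Hi Hl. pose proof (Hom i Hi). destruct (Nat.ltb_spec l d).
  - rewrite mvec_ham_matrix_q by auto. unfold modalQ_row. rewrite ltb_lt_d by auto.
    assert (E : mvec d K (modalQ_dual i) l = mmul d K (mmul d (tr Linv) U) l i / om i).
    { unfold mvec, mmul at 1, Rdiv. rewrite <- sum_to_scal_r. apply sum_to_ext. intros m Hm.
      unfold modalQ_dual. rewrite ltb_lt_d by auto. unfold Rdiv. ring. }
    rewrite E, K_Linvt_U, mmul_diagm by auto. field. lra.
  - replace l with (d + (l - d))%nat by lia.
    rewrite mvec_ham_matrix_p, (mvec_ext _ _ _ (fun _ => 0)).
    + unfold modalQ_row, mvec. rewrite ltb_add_d, sum_to_eq_0 by (intros; ring). ring.
    + intros k _. unfold modalQ_dual. now rewrite ltb_add_d.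
Qed.

Lemma modalP_row_ham_matrix i l : (i < d)%nat -> (l < d + d)%nat ->
  modalP_row i l = 2 * mvec (d + d) (ham_matrix d K Minv) (modalP_dual i) l.
Proof.
  intros Hi Hl. destruct (Nat.ltb_spec l d).
  - rewrite mvec_ham_matrix_q by auto. rewrite (mvec_ext _ _ _ (fun _ => 0)).
    + unfold modalP_row, mvec. rewrite ltb_lt_d, sum_to_eq_0 by (auto || (intros; ring)). ring.
    + intros k Hk. unfold modalP_dual. now rewrite ltb_lt_d.
  - replace l with (d + (l - d))%nat by lia. set (l' := (l - d)%nat).
    rewrite mvec_ham_matrix_p. unfold modalP_row. rewrite ltb_add_d, add_d_sub_d.
    assert (E : mvec d Minv (fun k => modalP_dual i (d + k)%nat) l' = mmul d (mmul d Minv L) U l' i).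
    { rewrite mmul_assoc. apply sum_to_ext. intros m Hm. unfold modalP_dual.
      now rewrite ltb_add_d, add_d_sub_d. }
    rewrite E, (meq_mmul d _ _ U U Minv_L (meq_refl d U)) by lia.
    unfold mmul, tr. field_simplify. apply sum_to_ext. intros; ring.
Qed.

Lemma dot_modalQ_row_dual i : (i < d)%nat -> dot (d + d) (modalQ_row i) (modalQ_dual i) = 1.
Proof.
  intros Hi. pose proof (Hom i Hi).
  rewrite dot_split_q by (intros; unfold modalQ_row; now rewrite ltb_add_d).
  pose proof (LUt_Linvt_U i i Hi Hi) as E. unfold idm in E. rewrite Nat.eqb_refl in E.
  rewrite <- E. apply sum_to_ext. intros k Hk. unfold modalQ_row, modalQ_dual.
  rewrite ltb_lt_d by auto.
  replace (mmul d (tr U) (tr L) i k) with (mmul d L U k i)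
    by (unfold mmul, tr; apply sum_to_ext; intros; ring).
  field. lra.
Qed.

Lemma dot_modalP_row_dual i : (i < d)%nat -> dot (d + d) (modalP_row i) (modalP_dual i) = 1.
Proof.
  intros Hi. rewrite dot_split_p by (intros; unfold modalP_row; now rewrite ltb_lt_d).
  pose proof (Ut_Linv_LU i i Hi Hi) as E. unfold idm in E. rewrite Nat.eqb_refl in E.
  rewrite <- E. apply sum_to_ext. intros k Hk. unfold modalP_row, modalP_dual.
  now rewrite ltb_add_d, add_d_sub_d.
Qed.

Lemma dot_modalQ_row_modalP_dual i : dot (d + d) (modalQ_row i) (modalP_dual i) = 0.
Proof.
  rewrite dot_split_q by (intros; unfold modalQ_row; now rewrite ltb_add_d).
  apply sum_to_eq_0. intros k Hk. unfold modalP_dual. rewrite ltb_lt_d by auto. ring.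
Qed.

Definition modal_quadratic (a b c : vec) (z : state) : R :=
  sum_to d (fun i => a i * modalQ d L U om (fst z) i ^ 2 + b i * modalP d Linv U (snd z) i ^ 2
                     + c i * modalQ d L U om (fst z) i * modalP d Linv U (snd z) i).

Definition modal_matrix (a b c : vec) : mat := fun k l =>
  sum_to d (fun i => a i * modalQ_row i k * modalQ_row i l) +
  (sum_to d (fun i => b i * modalP_row i k * modalP_row i l) +
   sum_to d (fun i => c i * modalQ_row i k * modalP_row i l)).

Lemma quad_modal_matrix a b c z :
  quad (d + d) (modal_matrix a b c) (phase_vec d z) = modal_quadratic a b c z.
Proof.
  unfold modal_matrix. rewrite !quad_plus, !quad_outer, <- !sum_to_plus.
  apply sum_to_ext. intros i _. rewrite !dot_scal_l, dot_modalQ_row, dot_modalP_row. ring.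
Qed.

Lemma frob_modal_matrix Sg a b c : symmetric (d + d) Sg ->
  is_half_inverse (d + d) (ham_matrix d K Minv) Sg ->
  frob (d + d) (modal_matrix a b c) Sg = sum_to d (fun i => a i + b i).
Proof.
  destruct HK as [HKs _].
  intros HSg Hhalf. pose proof (ham_matrix_sym d K Minv HKs Minv_sym) as Hsym.
  unfold modal_matrix. rewrite !frob_plus, !frob_outer, <- !sum_to_plus.
  apply sum_to_ext. intros i Hi. rewrite !bilin_scal_l.
  rewrite (bilin_half_inverse _ _ _ _ _ (modalQ_dual i) Hsym HSg Hhalf)
    by (intros; now apply modalQ_row_ham_matrix).
  rewrite !(bilin_half_inverse _ _ _ _ _ (modalP_dual i) Hsym HSg Hhalf)
    by (intros; now apply modalP_row_ham_matrix).
  rewrite dot_modalQ_row_dual, dot_modalP_row_dual, dot_modalQ_row_modalP_dual by auto. ring.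
Qed.

Lemma gauss_expect_modal_quadratic a b c :
  gauss_expect d (hamiltonian d Minv K) (modal_quadratic a b c) (sum_to d (fun i => a i + b i)).
Proof.
  destruct HK as [HKs HKpos].
  destruct (gaussian_moments_exist (d + d) (ham_matrix d K Minv)
              (ham_matrix_sym d K Minv HKs Minv_sym) (ham_matrix_pos_def d K Minv HKpos Minv_pos_def))
    as [Z [Sg HZ]].
  pose proof HZ as [_ [HSg [Hhalf _]]].
  rewrite <- (frob_modal_matrix Sg a b c HSg Hhalf).
  apply (gauss_expect_ext _ _ (fun z => quad (d + d) (modal_matrix a b c) (phase_vec d z))).
  - intros z. apply quad_modal_matrix.
  - now apply (gauss_expect_quad d K Minv Z Sg).
Qed.

End Modal.

(** * Energy error of one oscillator *)

Definition gainQ (t x : R) : R := (cos t ^ 2 + (sin t / x) ^ 2 - 1) / 2.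
Definition gainP (t x : R) : R := ((x * sin t) ^ 2 + cos t ^ 2 - 1) / 2.
Definition gainQP (t x : R) : R := cos t * x * sin t - sin t * cos t / x.

Lemma rotation_energy_change t x Q P : x <> 0 ->
  / 2 * ((cos t * Q + x * sin t * P) ^ 2 + (- / x * sin t * Q + cos t * P) ^ 2)
  - / 2 * (Q ^ 2 + P ^ 2)
  = gainQ t x * Q ^ 2 + gainP t x * P ^ 2 + gainQP t x * Q * P.
Proof. intros Hx. unfold gainQ, gainP, gainQP. field. exact Hx. Qed.

Lemma gainQ_plus_gainP t x : x <> 0 ->
  gainQ t x + gainP t x = sin t ^ 2 * (/ 2 * (x - / x) ^ 2).
Proof.
  intros Hx. unfold gainQ, gainP.
  replace (cos t ^ 2) with (1 - sin t ^ 2) by (pose proof (sin2_cos2 t); unfold Rsqr in *; nra).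
  field. exact Hx.
Qed.

Lemma sin_sqr_mul_bounds t r : 0 <= r -> 0 <= sin t ^ 2 * r <= r.
Proof.
  intros Hr. pose proof (sin2_cos2 t). unfold Rsqr in *.
  pose proof (pow2_ge_0 (sin t)). pose proof (pow2_ge_0 (cos t)). simpl in *. nra.
Qed.

Lemma rho_nonneg chi k : 0 <= rho chi k.
Proof. unfold rho. apply Rmult_le_pos; [lra | apply pow2_ge_0]. Qed.

(** * Iterating the integrator *)

Section Iteration.

Variables (d : nat) (L Linv U : mat) (om : vec) (theta chi : R -> R) (h : R) (psi : state -> state).
Hypothesis Hchi : forall i, (i < d)%nat -> chi (om i * h) <> 0.
Hypothesis Hpsi : forall z : state, forall i, (i < d)%nat ->
  modalQ d L U om (fst (psi z)) i =
    Mtilde_Q theta chi (om i * h) (modalQ d L U om (fst z) i) (modalP d Linv U (snd z) i) /\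
  modalP d Linv U (snd (psi z)) i =
    Mtilde_P theta chi (om i * h) (modalQ d L U om (fst z) i) (modalP d Linv U (snd z) i).

Lemma modal_iter n z i : (i < d)%nat ->
  modalQ d L U om (fst (Nat.iter n psi z)) i =
    Mtilde_Q (fun k => INR n * theta k) chi (om i * h)
      (modalQ d L U om (fst z) i) (modalP d Linv U (snd z) i) /\
  modalP d Linv U (snd (Nat.iter n psi z)) i =
    Mtilde_P (fun k => INR n * theta k) chi (om i * h)
      (modalQ d L U om (fst z) i) (modalP d Linv U (snd z) i).
Proof.
  intros Hi. unfold Mtilde_Q, Mtilde_P. induction n as [|n [IHQ IHP]].
  - simpl. rewrite Rmult_0_l, cos_0, sin_0. split; ring.
  - simpl Nat.iter. destruct (Hpsi (Nat.iter n psi z) i Hi) as [EQ EP].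
    rewrite EQ, EP, IHQ, IHP. unfold Mtilde_Q, Mtilde_P.
    rewrite S_INR, Rmult_plus_distr_r, Rmult_1_l, cos_plus, sin_plus.
    pose proof (Hchi i Hi). split; field; auto.
Qed.

Lemma modal_energy_change n z :
  let t i := INR n * theta (om i * h) in
  let x i := chi (om i * h) in
  / 2 * sum_to d (fun i => modalQ d L U om (fst (Nat.iter n psi z)) i ^ 2
                          + modalP d Linv U (snd (Nat.iter n psi z)) i ^ 2)
  - / 2 * sum_to d (fun i => modalQ d L U om (fst z) i ^ 2 + modalP d Linv U (snd z) i ^ 2)
  = modal_quadratic d L Linv U om (fun i => gainQ (t i) (x i)) (fun i => gainP (t i) (x i))
      (fun i => gainQP (t i) (x i)) z.
Proof.
  intros t x. rewrite <- !sum_to_scal_l, <- sum_to_minus. apply sum_to_ext. intros i Hi.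
  destruct (modal_iter n z i Hi) as [EQ EP]. rewrite EQ, EP. unfold Mtilde_Q, Mtilde_P.
  rewrite <- rotation_energy_change by (apply Hchi, Hi). unfold t, x. ring.
Qed.

End Iteration.

Theorem theorem6p2
  (d : nat) (M Minv K L Linv U : mat) (om : vec)
  (theta chi : R -> R) (h : R) (psi : state -> state)
  (HM : spd d M) (HK : spd d K) (HMinv : is_inverse d M Minv)
  (HL : meq d M (mmul d L (tr L))) (HLinv : is_inverse d L Linv)
  (HU : orthogonal d U)
  (Hom : forall i, (i < d)%nat -> 0 < om i)
  (Hdiag : meq d (mmul d (tr U) (mmul d Linv (mmul d K (mmul d (tr Linv) U))))
                 (diagm (fun i => om i ^ 2)))
  (Hchi : forall k, 0 < k -> chi k <> 0)
  (Hh : 0 < h)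
  (Hpsi : forall z : state, forall i, (i < d)%nat ->
      modalQ d L U om (fst (psi z)) i =
        Mtilde_Q theta chi (om i * h)
          (modalQ d L U om (fst z) i) (modalP d Linv U (snd z) i) /\
      modalP d Linv U (snd (psi z)) i =
        Mtilde_P theta chi (om i * h)
          (modalQ d L U om (fst z) i) (modalP d Linv U (snd z) i)) :
  forall n : nat, exists e : R,
    gauss_expect d (hamiltonian d Minv K)
      (fun z => hamiltonian d Minv K (Nat.iter n psi z) - hamiltonian d Minv K z) e /\
    0 <= e <= sum_to d (fun j => rho chi (om j * h)).
Proof.
  intros n.
  assert (Hchi' : forall i, (i < d)%nat -> chi (om i * h) <> 0)
    by (intros; apply Hchi, Rmult_lt_0_compat; auto).
  set (t i := INR n * theta (om i * h)). set (x i := chi (om i * h)).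
  exists (sum_to d (fun i => gainQ (t i) (x i) + gainP (t i) (x i))). split.
  - eapply gauss_expect_ext;
      [|exact (gauss_expect_modal_quadratic d M Minv K L Linv U om HMinv HL HLinv HU HK Hom Hdiag
                 _ _ (fun i => gainQP (t i) (x i)))].
    intros z. rewrite !(hamiltonian_modal d M Minv K L Linv U om HMinv HL HLinv HU Hdiag).
    symmetry. exact (modal_energy_change d L Linv U om theta chi h psi Hchi' Hpsi n z).
  - rewrite (sum_to_ext _ _ (fun i => sin (t i) ^ 2 * rho chi (om i * h)))
      by (intros; apply gainQ_plus_gainP, Hchi'; auto).
    split; [apply sum_to_nonneg | apply sum_to_le]; intros i _;
      apply (sin_sqr_mul_bounds (t i)), rho_nonneg.
Qed.
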